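(* Let $(G,u,v,\alpha,\beta)$ be a Guvab with $\lim_{k\to\infty}W_k=0$. If there exists $N\ge0$ such that $\{W_k\}_{k\ge N}$ is a constant sequence, then $\{W_k\}_{k\ge1}$ is a constant sequence.
   Context: A Guvab is a tuple $(G,u,v,\alpha,\beta)$ where $G$ is a finite, connected, simple graph, $u,v\in V(G)$, and $\alpha,\beta\in[0,1]$ with $\alpha\le\beta$. A random walk on $G$ with starting vertex $w$ and laziness $\gamma$ is the Markov chain $R_0=w$ and, for $i\ge1$, $R_i=R_{i-1}$ with probability $\gamma$ and $R_i=t$ with probability $\frac{1-\gamma}{\deg(R_{i-1})}$ for each neighbor $t$ of $R_{i-1}$. $\mu_k$ is the distribution after $k$ steps of the walk from $u$ with laziness $\alpha$, $\nu_k$ that of the walk from $v$ with laziness $\beta$, and $W_k=W(\mu_k,\nu_k)$ is the Wasserstein ($L^1$ optimal transport) distance with respect to the graph distance. *)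

From HB Require Import structures.
From mathcomp Require Import all_boot all_order all_algebra.
From mathcomp Require Import all_classical all_reals all_analysis.
Set Implicit Arguments. Unset Strict Implicit. Unset Printing Implicit Defensive.
Import Order.TTheory GRing.Theory Num.Theory.
Local Open Scope ring_scope.
Local Open Scope classical_set_scope.

Section Guvab.
Variables (R : realType) (T : finType) (e : rel T).

Definition simple_graph : Prop :=
  symmetric e /\ irreflexive e.
Definition connected_graph : Prop :=
  forall x y : T, connect e x y.

Definition nbhd (x : T) : {set T} := [set y | e x y].
Definition deg (x : T) : nat := #|nbhd x|.

Fixpoint reach (n : nat) (x : T) : {set T} :=
  match n with
  | 0 => [set x]
  | n.+1 => reach n x :|: \bigcup_(z in reach n x) nbhd z
  end.

(* graph distance: least n with y reachable in <= n steps
   (on a connected graph such an n < #|T| always exists) *)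
Definition gdist (x y : T) : nat :=
  find (fun n => y \in reach n x) (iota 0 #|T|).

(* one-step transition probability of the lazy random walk with laziness g;
   an isolated vertex (only possible when #|T| = 1) stays put. *)
Definition trans (g : R) (x y : T) : R :=
  if x == y then (if deg x == 0%N then 1 else g)
  else if e x y then (1 - g) / (deg x)%:R else 0.

Fixpoint walk_dist (g : R) (w : T) (k : nat) : T -> R :=
  match k with
  | 0 => fun y => if y == w then 1 else 0
  | k.+1 => fun y => \sum_(x : T) walk_dist g w k x * trans g x y
  end.

Definition coupling (mu nu : T -> R) (pi : T -> T -> R) : Prop :=
  (forall x y, 0 <= pi x y) /\
  (forall x, \sum_(y : T) pi x y = mu x) /\
  (forall y, \sum_(x : T) pi x y = nu y).

Definition transport_cost (pi : T -> T -> R) : R :=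
  \sum_(x : T) \sum_(y : T) (gdist x y)%:R * pi x y.

Definition wasserstein (mu nu : T -> R) : R :=
  inf [set c | exists pi, coupling mu nu pi /\ c = transport_cost pi].

Definition Wk (u v : T) (alpha beta : R) (k : nat) : R :=
  wasserstein (walk_dist alpha u k) (walk_dist beta v k).

End Guvab.

(* Once [W_k] is constant from [N] on, it is [0] there (it tends to [0]), so the
   two walks have equal laws [mu_k = nu_k] for [k >= N].  The lazy walk kernel [K]
   is reversible for the degree, i.e. self-adjoint for the inner product weighted
   by [1 / deg]; hence [|K m|^2 = <m, K^2 m>], and [K^N m = 0] forces [K m = 0].
   If [alpha = beta], apply this to [delta_u - delta_v]: [mu_1 = nu_1], so the
   laws agree for all [k >= 1].  If [alpha < beta], comparing the steps from
   [mu_N = nu_N] to [mu_(N+1) = nu_(N+1)] shows that [pi = mu_N] is stationary for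
   the simple walk, hence for every laziness; applied to [delta_u - pi] and
   [delta_v - pi] the same argument gives [mu_k = pi = nu_k] for all [k >= 1].
   Either way [W_k = 0] for every [k >= 1]. *)

From HB Require Import structures.
From mathcomp Require Import all_boot all_order all_algebra.
From mathcomp Require Import all_classical all_reals all_analysis.
From mathcomp Require Import ring lra.
Import Order.TTheory GRing.Theory Num.Theory.
Import numFieldNormedType.Exports.
Local Open Scope classical_set_scope.
Local Open Scope ring_scope.

Set Implicit Arguments.
Unset Strict Implicit.

Section ReversibleStep.
Variables (R : realFieldType) (T : finType) (w : T -> R) (K : T -> T -> R).
Hypothesis w_gt0 : forall x, 0 < w x.
Hypothesis K_rev : forall x y, w x * K x y = w y * K y x.

Definition step (m : T -> R) : T -> R := fun y => \sum_x m x * K x y.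

Lemma stepB (m1 m2 : T -> R) : step (m1 - m2) = step m1 - step m2.
Proof.
apply: funext => y; rewrite /step !fctE -sumrB.
by apply: eq_bigr => x _; rewrite mulrBl.
Qed.

Lemma iter_stepB n (m1 m2 : T -> R) : iter n step (m1 - m2) = iter n step m1 - iter n step m2.
Proof. by elim: n => //= n ->; rewrite stepB. Qed.

Lemma rev_div x y : K x y / w y = K y x / w x.
Proof.
apply/eqP; rewrite eqr_div ?lt0r_neq0 //.
by rewrite mulrC [K y x * _]mulrC K_rev.
Qed.

(* [K] is self-adjoint for the inner product weighted by [1 / w], so
   [|K m|^2 = <m, K (K m)>] and [K (K m) = 0] forces [K m = 0]. *)
Lemma step_eq0_of_step2_eq0 m : step (step m) = 0 -> step m = 0.
Proof.
set rho := step m => rho2_eq0.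
have norm_rho : \sum_y rho y * (rho y / w y) = \sum_x m x / w x * step rho x.
  under eq_bigr => y _ do rewrite {1}/rho /step mulr_suml.
  rewrite exchange_big /=; apply: eq_bigr => x _.
  rewrite /step mulr_sumr; apply: eq_bigr => y _.
  transitivity (m x * (K x y / w y) * rho y); first by ring.
  by rewrite rev_div; ring.
have terms_ge0 y : true -> 0 <= rho y * (rho y / w y).
  by move=> _; rewrite mulrA divr_ge0 ?sqr_ge0 -?expr2 ?sqr_ge0 ?ltW.
have norm_rho0 : \sum_y rho y * (rho y / w y) = 0.
  by rewrite norm_rho rho2_eq0 big1 // => x _; rewrite mulr0.
apply: funext => y; have /eqP := psumr_eq0P terms_ge0 norm_rho0 (i := y) isT.
by rewrite mulrA !mulf_eq0 orbb invr_eq0 (negPf (lt0r_neq0 (w_gt0 y))) orbF => /eqP.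
Qed.

Lemma step_eq0_of_iter_eq0 n m : (0 < n)%N -> iter n step m = 0 -> step m = 0.
Proof.
elim: n m => [//|[|n] IH] m _ iter_eq0; first exact: iter_eq0.
by apply: step_eq0_of_step2_eq0; apply: IH => //; rewrite -iterSr.
Qed.

Lemma iter_step_eq n (m1 m2 : T -> R) : (0 < n)%N ->
  iter n step m1 = iter n step m2 -> forall k, (0 < k)%N -> iter k step m1 = iter k step m2.
Proof.
move=> n_gt0 eq_n; have : step (m1 - m2) = 0.
  by apply: step_eq0_of_iter_eq0 n_gt0 _; rewrite iter_stepB eq_n subrr.
rewrite stepB => /eqP; rewrite subr_eq0 => /eqP eq_1.
by elim=> [//|[|k] IH _]; rewrite ?iterSr ?eq_1 // !iterS IH.
Qed.

End ReversibleStep.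

Section LazyWalk.
Variables (R : realType) (T : finType) (e : rel T).
Hypothesis e_sym : symmetric e.
Implicit Types (g a b : R) (m : T -> R).

Lemma deg_gt0 x y : e x y -> (0 < deg e x)%N.
Proof. by move=> exy; apply/card_gt0P; exists y; rewrite inE. Qed.

(* The degree, made positive at an isolated vertex, is a reversing measure. *)
Definition weight x : R := (maxn (deg e x) 1)%:R.

Lemma weight_gt0 x : 0 < weight x.
Proof. by rewrite ltr0n leq_max orbT. Qed.

Lemma trans_reversible g x y : weight x * trans e g x y = weight y * trans e g y x.
Proof.
rewrite /trans; case: (eqVneq x y) => [->//|neq_xy].
rewrite -(e_sym x y); case exy: (e x y); last by rewrite !mulr0.
have eyx : e y x by rewrite e_sym.
rewrite /weight (maxn_idPl (deg_gt0 exy)) (maxn_idPl (deg_gt0 eyx)).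
by rewrite mulrCA [RHS]mulrCA !divff ?mulr1 // pnatr_eq0 -lt0n ?(deg_gt0 exy) ?(deg_gt0 eyx).
Qed.

Lemma walk_distE g u k :
  walk_dist e g u k = iter k (step (trans e g)) (walk_dist e g u 0).
Proof. by elim: k => //= k <-. Qed.

Lemma trans_lazy g x y : trans e g x y = g * (x == y)%:R + (1 - g) * trans e 0 x y.
Proof.
rewrite /trans; case: eqVneq => [->|_] /=; first by case: (deg e y == 0)%N; ring.
by case: (e x y); ring.
Qed.

Lemma step_lazy g m y : step (trans e g) m y = g * m y + (1 - g) * step (trans e 0) m y.
Proof.
rewrite /step; under eq_bigr => x _ do rewrite trans_lazy mulrDr mulrCA (mulrCA (m x)).
rewrite big_split /= -!mulr_sumr (bigD1 y) //= eqxx mulr1 big1 ?addr0 // => x.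
by move=> /negPf ->; rewrite mulr0.
Qed.

(* The lazy step is [g m + (1 - g) P m] with [P] the simple walk, so two distinct
   laziness values force [P m = m]. *)
Lemma stationary_lazy a b m : a != b ->
  step (trans e a) m = step (trans e b) m -> forall g, step (trans e g) m = m.
Proof.
move=> neq_ab eq_ab; have simple_fix y : step (trans e 0) m y = m y.
  have /eqP := congr1 (fun f => f y) eq_ab; rewrite (step_lazy a) (step_lazy b) -subr_eq0.
  have -> : a * m y + (1 - a) * step (trans e 0) m y
            - (b * m y + (1 - b) * step (trans e 0) m y)
            = (b - a) * (step (trans e 0) m y - m y) by ring.
  by rewrite mulf_eq0 subr_eq0 eq_sym (negPf neq_ab) subr_eq0 => /eqP.
by move=> g; apply: funext => y; rewrite step_lazy simple_fix; ring.
Qed.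

Lemma walk_dist_stationary g u N m : (0 < N)%N ->
  step (trans e g) m = m -> walk_dist e g u N = m ->
  forall k, (0 < k)%N -> walk_dist e g u k = m.
Proof.
move=> N_gt0 m_fix walk_N k k_gt0.
have iter_fix n : iter n (step (trans e g)) m = m by elim: n => //= n ->.
have eq_N : iter N (step (trans e g)) (walk_dist e g u 0) = iter N (step (trans e g)) m.
  by rewrite -walk_distE iter_fix walk_N.
by rewrite walk_distE -(iter_fix k) (iter_step_eq weight_gt0 (trans_reversible g) N_gt0 eq_N k_gt0).
Qed.

Lemma walk_dist_eq_from1 a b u v N : (0 < N)%N ->
  (forall k, (N <= k)%N -> walk_dist e a u k = walk_dist e b v k) ->
  forall k, (0 < k)%N -> walk_dist e a u k = walk_dist e b v k.
Proof.
move=> N_gt0 eq_late k k_gt0; case: (eqVneq a b) => [eq_ab | neq_ab].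
  subst b; rewrite (walk_distE a u k) (walk_distE a v k).
  apply: (iter_step_eq weight_gt0 (trans_reversible a) N_gt0 _ k_gt0).
  by rewrite -!walk_distE eq_late.
set pi := walk_dist e a u N.
have pi_fix : forall g, step (trans e g) pi = pi.
  apply: (stationary_lazy neq_ab).
  rewrite -[LHS]/(walk_dist e a u N.+1) eq_late // /pi eq_late //.
rewrite (walk_dist_stationary N_gt0 (pi_fix a) erefl k_gt0).
exact/esym/(walk_dist_stationary N_gt0 (pi_fix b) (esym (eq_late N (leqnn N))) k_gt0).
Qed.

End LazyWalk.

Section WalkDistribution.
Variables (R : realType) (T : finType) (e : rel T).
Hypothesis e_irr : irreflexive e.
Variable g : R.
Hypotheses (g_ge0 : 0 <= g) (g_le1 : g <= 1).

Lemma trans_ge0 x y : 0 <= trans e g x y.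
Proof.
rewrite /trans; case: eqP => _; first by case: ifP.
by case: ifP => // _; rewrite divr_ge0 ?subr_ge0.
Qed.

Lemma trans_sum1 x : \sum_y trans e g x y = 1.
Proof.
rewrite (bigD1 x) //= {1}/trans eqxx.
under eq_bigr => y neq_yx do rewrite /trans eq_sym (negPf neq_yx).
rewrite -big_mkcondr (eq_bigl (mem (nbhd e x))) => [|y]; last first.
  by rewrite !inE; case: eqP => [->|] /=; rewrite ?e_irr.
rewrite sumr_const -/(deg e x); case: (eqVneq (deg e x) 0) => [->|deg_neq0].
  by rewrite mulr0n addr0.
by rewrite -[_ *+ deg e x]mulr_natr divfK ?pnatr_eq0 // addrC subrK.
Qed.

Lemma walk_dist_ge0 u k y : 0 <= walk_dist e g u k y.
Proof.
elim: k y => [|k IH] y /=; first by case: eqP.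
by apply: sumr_ge0 => x _; rewrite mulr_ge0 ?trans_ge0.
Qed.

Lemma walk_dist_sum1 u k : \sum_y walk_dist e g u k y = 1.
Proof.
elim: k => [|k IH] /=.
  by rewrite (bigD1 u) //= eqxx big1 ?addr0 // => y /negPf ->.
rewrite exchange_big /= -[RHS]IH; apply: eq_bigr => x _.
by rewrite -mulr_sumr trans_sum1 mulr1.
Qed.

End WalkDistribution.

Section Wasserstein.
Variables (R : realType) (T : finType) (e : rel T).
Implicit Types (m : T -> R) (pi : T -> T -> R).

Lemma vertex_card_gt0 (x : T) : (0 < #|T|)%N.
Proof. by apply/card_gt0P; exists x. Qed.

Lemma gdist_xx x : gdist e x x = 0%N.
Proof. by rewrite /gdist; case: #|T| (vertex_card_gt0 x) => //= n _; rewrite inE eqxx. Qed.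

Lemma gdist_gt0 x y : x != y -> (0 < gdist e x y)%N.
Proof.
rewrite /gdist; case: #|T| (vertex_card_gt0 x) => //= n _.
by rewrite inE eq_sym => /negPf ->.
Qed.

Lemma transport_cost_ge0 pi : (forall x y, 0 <= pi x y) -> 0 <= transport_cost e pi.
Proof. by move=> pi_ge0; do 2!apply: sumr_ge0 => ? _; apply: mulr_ge0. Qed.

Lemma diagonal_coupling m : (forall x, 0 <= m x) ->
  coupling m m (fun x y => if x == y then m x else 0).
Proof.
move=> m_ge0; split; first by move=> x y; case: eqP.
split=> x; rewrite (bigD1 x) //= eqxx big1 ?addr0 // => y /negPf.
  by rewrite eq_sym => ->.
by move=> ->.
Qed.

Lemma product_coupling m1 m2 : (forall x, 0 <= m1 x) -> (forall x, 0 <= m2 x) ->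
  \sum_x m1 x = 1 -> \sum_x m2 x = 1 -> coupling m1 m2 (fun x y => m1 x * m2 y).
Proof.
move=> m1_ge0 m2_ge0 m1_sum1 m2_sum1; split; first by move=> x y; apply: mulr_ge0.
by split=> x; rewrite -?mulr_sumr -?mulr_suml ?m1_sum1 ?m2_sum1 ?mulr1 ?mul1r.
Qed.

Lemma wasserstein_self m : (forall x, 0 <= m x) -> wasserstein e m m = 0.
Proof.
move=> m_ge0; rewrite /wasserstein; set S := (X in inf X).
have S0 : S 0.
  exists (fun x y => if x == y then m x else 0); split; first exact: diagonal_coupling.
  apply/esym/big1 => x _; apply: big1 => y _.
  by case: eqP => [->|_]; rewrite ?gdist_xx ?mulr0 ?mul0r.
have S_ge0 : lbound S 0 by move=> c [pi [[pi_ge0 _] ->]]; exact: transport_cost_ge0.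
apply/eqP; rewrite eq_le (ge_inf (ex_intro _ 0 S_ge0)) //=.
exact: lb_le_inf (ex_intro _ 0 S0) S_ge0.
Qed.

Lemma sum_neq_le_weighted (f : T -> R) (d : T -> nat) x :
  (forall y, 0 <= f y) -> (forall y, y != x -> (0 < d y)%N) ->
  \sum_(y | y != x) f y <= \sum_y (d y)%:R * f y.
Proof.
move=> f_ge0 d_gt0; rewrite [leRHS](bigD1 x) //= -[leLHS]add0r.
apply: lerD; first by rewrite mulr_ge0.
by apply: ler_sum => y neq_yx; rewrite ler_peMl // ler1n d_gt0.
Qed.

Lemma coupling_le_cost m1 m2 pi x :
  coupling m1 m2 pi -> `|m1 x - m2 x| <= transport_cost e pi.
Proof.
move=> [pi_ge0 [row col]].
have row_x : m1 x = pi x x + \sum_(y | y != x) pi x y by rewrite -row (bigD1 x).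
have col_x : m2 x = pi x x + \sum_(y | y != x) pi y x by rewrite -col (bigD1 x).
have row_le : \sum_(y | y != x) pi x y <= transport_cost e pi.
  have gdist_row y : y != x -> (0 < gdist e x y)%N by rewrite eq_sym; apply: gdist_gt0.
  apply: le_trans (sum_neq_le_weighted (pi_ge0 x) gdist_row) _.
  rewrite /transport_cost [leRHS](bigD1 x) //= lerDl.
  by apply: sumr_ge0 => z _; apply: sumr_ge0 => y _; apply: mulr_ge0.
have col_le : \sum_(y | y != x) pi y x <= transport_cost e pi.
  have gdist_col y : y != x -> (0 < gdist e y x)%N by apply: gdist_gt0.
  apply: le_trans (sum_neq_le_weighted (pi_ge0 ^~ x) gdist_col) _.
  rewrite /transport_cost exchange_big [leRHS](bigD1 x) //= lerDl.
  by apply: sumr_ge0 => y _; apply: sumr_ge0 => z _; apply: mulr_ge0.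
have row_ge0 : 0 <= \sum_(y | y != x) pi x y by apply: sumr_ge0.
have col_ge0 : 0 <= \sum_(y | y != x) pi y x by apply: sumr_ge0.
rewrite row_x col_x ler_norml; lra.
Qed.

Lemma eq_of_wasserstein_eq0 m1 m2 : (forall x, 0 <= m1 x) -> (forall x, 0 <= m2 x) ->
  \sum_x m1 x = 1 -> \sum_x m2 x = 1 -> wasserstein e m1 m2 = 0 -> m1 = m2.
Proof.
move=> m1_ge0 m2_ge0 m1_sum1 m2_sum1 W_eq0; apply: funext => x.
have coupled := product_coupling m1_ge0 m2_ge0 m1_sum1 m2_sum1.
have : `|m1 x - m2 x| <= wasserstein e m1 m2.
  apply: lb_le_inf; first by exists (transport_cost e (fun x y => m1 x * m2 y)), (fun x y => m1 x * m2 y).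
  by move=> c [pi [pi_coupling ->]]; exact: coupling_le_cost.
by rewrite W_eq0 normr_le0 subr_eq0 => /eqP.
Qed.

End Wasserstein.

Lemma eventually_cst_cvg_eq (U : topologicalType) (f : nat -> U) (l : U) N :
  hausdorff_space U -> f @ \oo --> l -> (forall k, (N <= k)%N -> f k = f N) -> f N = l.
Proof.
move=> U_hausdorff f_cvg f_cst; apply: (cvg_unique U_hausdorff _ f_cvg).
by apply: cvg_near_cst; near=> k; apply: f_cst; near: k; exact: nbhs_infty_ge.
Unshelve. all: by end_near.
Qed.

Theorem lemma6p5 (R : realType) (T : finType) (e : rel T) (u v : T)
    (alpha beta : R) :
  simple_graph e -> connected_graph e ->
  0 <= alpha -> alpha <= beta -> beta <= 1 ->
  (fun k => Wk e u v alpha beta k) @ \oo --> (0 : R) ->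
  (exists N : nat, forall k : nat, (N <= k)%N ->
     Wk e u v alpha beta k = Wk e u v alpha beta N) ->
  forall k : nat, (1 <= k)%N ->
     Wk e u v alpha beta k = Wk e u v alpha beta 1.
Proof.
move=> [e_sym e_irr] _ alpha_ge0 alpha_le_beta beta_le1 W_cvg [N W_cst] k k_gt0.
have beta_ge0 : 0 <= beta by apply: le_trans alpha_le_beta.
have alpha_le1 : alpha <= 1 by apply: le_trans beta_le1.
have W_N : Wk e u v alpha beta N = 0 := eventually_cst_cvg_eq (@Rhausdorff R) W_cvg W_cst.
have walks_eq_late j : (N.+1 <= j)%N -> walk_dist e alpha u j = walk_dist e beta v j.
  move=> lt_Nj; apply: (eq_of_wasserstein_eq0 (e := e)); rewrite ?walk_dist_sum1 //.
  1, 2: by move=> y; apply: walk_dist_ge0.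
  by rewrite -/(Wk e u v alpha beta j) W_cst ?W_N // ltnW.
have walks_eq := walk_dist_eq_from1 e_sym (ltn0Sn N) walks_eq_late.
by rewrite /Wk -!walks_eq // !wasserstein_self // => y; apply: walk_dist_ge0.
Qed.
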